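(* There exists a constant $r_b>0$, depending on $r$, and a constant $C>0$ such that for all $\varepsilon>0$: (1) if $\xi\in\mathbb{H}^N$ and $\eta\in\mathbb{H}^N\setminus B_r(0)$ satisfy $|\eta^{-1}\circ\xi|\le r_b$, then $|u_\varepsilon(\xi)-u_\varepsilon(\eta)|\le C\varepsilon^{\frac{Q-2s}{2}}|\eta^{-1}\circ\xi|$; (2) if $\xi,\eta\in\mathbb{H}^N\setminus B_r(0)$, then $|u_\varepsilon(\xi)-u_\varepsilon(\eta)|\le C\varepsilon^{\frac{Q-2s}{2}}\min\{1,|\eta^{-1}\circ\xi|\}$.
   Context: $\mathbb{H}^N=\mathbb{R}^{2N+1}$ with group law $\xi\circ\xi'=(x+x',y+y',t+t'+2(x'\cdot y-y'\cdot x))$, $Q=2N+2$, dilations $\delta_a(x,y,t)=(ax,ay,a^2t)$, homogeneous norm $|\xi|=((|x|^2+|y|^2)^2+t^2)^{1/4}$, balls $B_r(0)=\{|\xi|<r\}$, $s\in(0,1)$, $Q^*_s=\frac{2Q}{Q-2s}$. $S_s>0$ is the sharp fractional Sobolev constant on $\mathbb{H}^N$. $U(x,y,t)=C_0(t^2+(1+|x|^2+|y|^2)^2)^{-\frac{Q-2s}{4}}$ ($C_0>0$), $\overline{u}=U/\|U\|_{L^{Q^*_s}(\mathbb{H}^N)}$, $u^*(\xi)=\overline{u}(\delta_{S_s^{-1/(2s)}}(\xi))$, $U_\varepsilon(\xi)=\varepsilon^{-\frac{Q-2s}{2}}u^*(\delta_{1/\varepsilon}(\xi))$. $\Omega\subseteq\mathbb{H}^N$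 is bounded open, $r>0$ with $B_{4r}(0)\subset\Omega$, $\phi\in C^\infty(\mathbb{H}^N)$, $0\le\phi\le1$, $\phi=1$ on $B_r(0)$, $\phi=0$ outside $B_{2r}(0)$, and $u_\varepsilon=U_\varepsilon\phi$. *)

From HB Require Import structures.
From mathcomp Require Import all_boot all_order all_algebra.
From mathcomp Require Import all_classical all_reals all_analysis.
Set Implicit Arguments. Unset Strict Implicit. Unset Printing Implicit Defensive.
Import Order.TTheory GRing.Theory Num.Theory.
Import numFieldNormedType.Exports.
Local Open Scope classical_set_scope.
Local Open Scope ring_scope.

(* The Heisenberg group H^N, realised on R^(2N+1) = 'rV[R]_(N + N + 1),
   coordinates (x, y, t) with x, y in R^N and t in R. *)
Definition Heis (R : realType) (N : nat) := 'rV[R]_(N + N + 1).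

Section Heisenberg.
Variables (R : realType) (N : nat).
Local Notation H := (Heis R N).

Definition hx (p : H) (i : 'I_N) : R := p ord0 (lshift 1 (lshift N i)).
Definition hy (p : H) (i : 'I_N) : R := p ord0 (lshift 1 (rshift N i)).
Definition ht (p : H) : R := p ord0 (rshift (N + N) (@ord0 0)).

Definition hmk (x y : 'I_N -> R) (t : R) : H :=
  \row_(k < N + N + 1)
    match fintype.split k with
    | inl k' => match fintype.split k' with inl i => x i | inr i => y i end
    | inr _ => t
    end.

Definition dotN (u v : 'I_N -> R) : R := \sum_(i < N) u i * v i.
Definition sqN (u : 'I_N -> R) : R := dotN u u.

Definition hmul (p q : H) : H :=
  hmk (fun i => hx p i + hx q i) (fun i => hy p i + hy q i)
      (ht p + ht q + 2 * (dotN (hx q) (hy p) - dotN (hy q) (hx p))).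

Definition hinv (p : H) : H :=
  hmk (fun i => - hx p i) (fun i => - hy p i) (- ht p).

Definition hdil (a : R) (p : H) : H :=
  hmk (fun i => a * hx p i) (fun i => a * hy p i) (a ^+ 2 * ht p).

Definition hnorm (p : H) : R :=
  Num.sqrt (Num.sqrt ((sqN (hx p) + sqN (hy p)) ^+ 2 + ht p ^+ 2)).

Definition hball (r : R) : set H := [set p | hnorm p < r].

Definition Qdim : R := (2 * N + 2)%:R.

Definition Ubub (s C0 : R) (p : H) : R :=
  C0 * powR (ht p ^+ 2 + (1 + sqN (hx p) + sqN (hy p)) ^+ 2)
            (- ((Qdim - 2 * s) / 4)).

(* ubar = U / nrmU, where nrmU stands for ||U||_{L^{Q*_s}(H^N)} *)
Definition ubar (s C0 nrmU : R) (p : H) : R := Ubub s C0 p / nrmU.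

Definition ustar (s C0 nrmU S : R) (p : H) : R :=
  ubar s C0 nrmU (hdil (powR S (- (1 / (2 * s)))) p).

Definition Ueps (s C0 nrmU S eps : R) (p : H) : R :=
  powR eps (- ((Qdim - 2 * s) / 2)) * ustar s C0 nrmU S (hdil (1 / eps) p).

Definition ueps (s C0 nrmU S eps : R) (phi : H -> R) (p : H) : R :=
  Ueps s C0 nrmU S eps p * phi p.

Fixpoint iter_deriv (f : H -> R) (vs : seq H) : H -> R :=
  match vs with
  | [::] => f
  | v :: vs' => fun x => 'D_v (iter_deriv f vs') x
  end.

Definition smooth (f : H -> R) : Prop :=
  forall (vs : seq H) (x : H), differentiable (iter_deriv f vs) x.

End Heisenberg.

From HB Require Import structures.
From mathcomp Require Import all_boot all_order all_algebra.
From mathcomp Require Import all_classical all_reals all_analysis.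
From mathcomp Require Import ring lra.
Import Order.TTheory GRing.Theory Num.Theory.
Import numFieldNormedType.Exports.
Local Open Scope classical_set_scope.
Local Open Scope ring_scope.

(* Unwinding the dilations, U_eps = K eps^((Q-2s)/2) G_nu^(-(Q-2s)/4) with
   G_nu(x, y, t) = t^2 + (nu + |x|^2 + |y|^2)^2 for some nu >= 0 depending on eps;
   G_0 is the fourth power of the homogeneous norm.  Off B_r(0) we have G_nu >= r^4,
   which bounds U_eps.  If moreover h = |eta^-1 o xi| <= r/60 and e^4 = G_nu(eta), the
   group law and Cauchy-Schwarz move |x|^2 + |y|^2 and t by at most 2eh + h^2, so G_nu
   moves by at most 18 h e^3 and stays above e^4/2; the mean value theorem for
   g |-> g^(-(Q-2s)/4) then gives a Lipschitz bound on U_eps that is uniform in nu.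
   The cutoff phi is Lipschitz for the same distance: outside B_3r(0) both values vanish,
   and inside it the Euclidean coordinates move by O(h).  Finally, the product of a
   bounded Lipschitz function with a [0,1]-valued Lipschitz one is Lipschitz at
   distances below r_b = min(r/60, 1) and bounded by twice its supremum beyond. *)

Set Implicit Arguments. Unset Strict Implicit. Unset Printing Implicit Defensive.

Section RealInequalities.
Context {R : realType}.
Implicit Types (x y c b d e m : R).

Lemma normr_le_sqr x c : 0 <= c -> x ^+ 2 <= c ^+ 2 -> `|x| <= c.
Proof. by move=> c0 xc; rewrite -ler_sqr ?nnegrE // real_normK ?num_real. Qed.

Lemma le_of_expr4_le x y : 0 <= x -> 0 <= y -> x ^+ 4 <= y ^+ 4 -> x <= y.
Proof. by move=> x0 y0; rewrite ler_pXn2r. Qed.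

Lemma sqrt_sqrt_expr4 x : 0 <= x -> Num.sqrt (Num.sqrt x) ^+ 4 = x.
Proof. by move=> x0; rewrite (exprM _ 2 2) !sqr_sqrtr ?sqrtr_ge0. Qed.

Lemma sum_CauchySchwarz {I : finType} (u v : I -> R) :
  (\sum_i u i * v i) ^+ 2 <= (\sum_i u i ^+ 2) * (\sum_i v i ^+ 2).
Proof.
set X := \sum_i _; set A := \sum_i u i ^+ 2; set B := \sum_i v i ^+ 2.
have quad l : 0 <= l ^+ 2 * A - 2 * l * X + B.
  have -> : l ^+ 2 * A - 2 * l * X + B = \sum_i (l * u i - v i) ^+ 2.
    rewrite /A /X /B !mulr_sumr -sumrB -big_split /=.
    by apply: eq_bigr => i _; ring.
  by apply: sumr_ge0 => i _; exact: sqr_ge0.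
have [A0|A_neq0] := eqVneq A 0.
  have u0 i : u i = 0.
    by apply/eqP; rewrite -sqrf_eq0; apply/eqP/(psumr_eq0P _ A0) => // j _; rewrite sqr_ge0.
  by rewrite /X big1 ?expr0n ?A0 ?mul0r // => i _; rewrite u0 mul0r.
have A_gt0 : 0 < A by rewrite lt0r A_neq0 sumr_ge0 // => i _; rewrite sqr_ge0.
have := quad (X / A).
have -> : (X / A) ^+ 2 * A - 2 * (X / A) * X + B = B - X ^+ 2 / A by field.
by rewrite subr_ge0 ler_pdivrMr // mulrC.
Qed.

Lemma sqr_add_sqr_perturb x1 y1 x2 y2 d e :
  20 * d <= e ^+ 2 -> x2 ^+ 2 + y2 ^+ 2 = e ^+ 4 ->
  `|x1 - x2| <= d -> `|y1 - y2| <= d ->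
  `|(x1 ^+ 2 + y1 ^+ 2) - (x2 ^+ 2 + y2 ^+ 2)| <= 6 * d * e ^+ 2.
Proof.
move=> de E dx dy.
have d0 : 0 <= d := le_trans (normr_ge0 _) dx.
have e4 : e ^+ 4 = (e ^+ 2) ^+ 2 by rewrite -exprM.
have sum_le (z1 z2 : R) : `|z2| <= e ^+ 2 -> `|z1 - z2| <= d -> `|z1 + z2| <= 3 * e ^+ 2.
  move=> z2e dz; rewrite (_ : z1 + z2 = (z1 - z2) + z2 *+ 2); last by rewrite mulr2n; ring.
  by apply: le_trans (ler_normD _ _) _; rewrite normrMn; lra.
have x2e : `|x2| <= e ^+ 2 by apply: normr_le_sqr; rewrite ?sqr_ge0 // -e4 -E lerDl sqr_ge0.
have y2e : `|y2| <= e ^+ 2 by apply: normr_le_sqr; rewrite ?sqr_ge0 // -e4 -E lerDr sqr_ge0.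
rewrite (_ : _ - _ = (x1 - x2) * (x1 + x2) + (y1 - y2) * (y1 + y2)); last by ring.
apply: le_trans (ler_normD _ _) _; rewrite !normrM.
have -> : 6 * d * e ^+ 2 = d * (3 * e ^+ 2) + d * (3 * e ^+ 2) by ring.
by apply: lerD; apply: ler_pM; rewrite ?normr_ge0 // sum_le.
Qed.

Lemma le_powRN x y b : 0 < x -> x <= y -> 0 <= b -> y `^ (- b) <= x `^ (- b).
Proof.
move=> x0 xy b0; have y0 := lt_le_trans x0 xy.
rewrite !powRN lef_pV2 ?posrE ?powR_gt0 //.
by apply: ge0_ler_powR; rewrite // nnegrE ltW.
Qed.

Lemma powRN_lipschitz m x y b : 0 < m -> m <= x -> m <= y -> 0 <= b ->
  `|x `^ (- b) - y `^ (- b)| <= b * m `^ (- b - 1) * `|x - y|.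
Proof.
move=> m0 mx my b0.
wlog xy : x y mx my / x <= y.
  move=> W; have [/W|/ltW /W] := leP x y; first exact.
  by rewrite distrC [`|y - x|]distrC; apply.
have x0 := lt_le_trans m0 mx.
have itv_pos z : z \in `[x, y] -> 0 < z.
  by rewrite in_itv /= => /andP[xz _]; exact: lt_le_trans xz.
have cont : {within `[x, y], continuous (fun z : R => z `^ (- b))}.
  apply: continuous_in_subspaceT => z /set_mem /itv_pos z0.
  apply/differentiable_continuous/derivable1_diffP.
  by apply: derivable_powR; rewrite in_itv /= andbT.
have [c cxy E] := MVT_segment xy (fun z zxy =>
  @is_derive1_powR R (- b) z (itv_pos z (subset_itv_oo_cc zxy))) cont.
rewrite distrC E [`|x - y|]distrC !normrM normrN (ger0_norm b0).
rewrite ler_wpM2r // ler_wpM2l // ger0_norm ?powR_ge0 //.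
rewrite (_ : - b - 1 = - (b + 1)); last by ring.
apply: le_powRN; rewrite // ?addr_ge0 //.
by move: cxy; rewrite in_itv /= => /andP[xc _]; exact: le_trans xc.
Qed.

End RealInequalities.

Section LipschitzOnBox.
Context {R : realType} {n : nat} (f : 'rV[R]_n -> R).
Hypothesis f_diff : forall x, differentiable f x.
Hypothesis partial_cont : forall k, continuous ('D_(delta_mx 0 k) f).

Definition box (M : R) := [set x : 'rV[R]_n | forall i, `|x ord0 i| <= M].

Lemma box_compact M : compact (box M).
Proof.
rewrite (_ : box M = [set x | forall i, `[- M, M]%classic (x ord0 i)]).
  by apply: (@rV_compact _ _ (fun=> `[- M, M]%classic)) => _; exact: segment_compact.
by apply/seteqP; split=> x /= + i => /(_ i); rewrite /= in_itv /= ler_norml.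
Qed.

Lemma box_convex M p q c : box M p -> box M q -> 0 <= c <= 1 -> box M (q + c *: (p - q)).
Proof.
move=> Mp Mq /andP[c0 c1] i; have := Mp i; have := Mq i.
rewrite !mxE !ler_norml => /andP[q1 q2] /andP[p1 p2].
by apply/andP; split; nra.
Qed.

Lemma is_derive_along_line (q v : 'rV[R]_n) (t : R) :
  is_derive t 1 (fun t => f (q + t *: v)) ('D_v f (q + t *: v)).
Proof.
have E : (fun h : R => h^-1 *: (f (q + (h *: 1 + t) *: v) - f (q + t *: v)))
       = (fun h : R => h^-1 *: (f (h *: v + (q + t *: v)) - f (q + t *: v))).
  by apply: funext => h; rewrite scalerDl [h *: 1]mulr1 addrCA addrC.
split; first by rewrite /derivable /= E; exact: diff_derivable.
by rewrite /derive /= E.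
Qed.

Lemma partials_bounded_on_box M :
  exists D : 'I_n -> R, forall k x, box M x -> `|'D_(delta_mx 0 k) f x| <= D k.
Proof.
suff /choice[D HD] k : exists Dk : R, forall x, box M x -> `|'D_(delta_mx 0 k) f x| <= Dk.
  by exists D.
have /compact_bounded[D [_ HD]] :=
  continuous_compact (continuous_subspaceT (@partial_cont k)) (@box_compact M).
by exists (`|D| + 1) => x Mx; apply: (HD (`|D| + 1)); [have := ler_norm D; lra | exists x].
Qed.

Lemma lipschitz_on_box M : exists2 L, 0 <= L & forall p q, box M p -> box M q ->
  `|f p - f q| <= L * \sum_k `|p ord0 k - q ord0 k|.
Proof.
have [D HD] := partials_bounded_on_box M.
exists (\sum_k `|D k|) => [|p q Mp Mq]; first exact: sumr_ge0.
set v := p - q.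
have cont : {within `[0, 1], continuous (fun t => f (q + t *: v))}.
  apply: continuous_subspaceT => t.
  by case: (is_derive_along_line q v t) => /derivable1_diffP/differentiable_continuous.
have [c c01 E] := MVT_segment ler01 (fun t _ => is_derive_along_line q v t) cont.
rewrite scale1r scale0r addr0 subr0 mulr1 [q + v]addrC subrK in E.
have Mx : box M (q + c *: v) by apply: box_convex; rewrite -?in_itv.
set x := q + c *: v in E Mx *.
rewrite E deriveE // {1}(row_sum_delta v) linear_sum /= mulr_sumr.
apply: le_trans (ler_norm_sum _ _ _) _; apply: ler_sum => k _.
rewrite linearZ /= normrM mulrC !mxE ler_wpM2r // -deriveE //.
apply: le_trans (HD k _ Mx) (le_trans (ler_norm _) _).
by rewrite (bigD1 k) //= lerDl sumr_ge0.
Qed.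

End LipschitzOnBox.

Section CutoffProduct.
Context {R : realType} {T : Type} (d : T -> T -> R) (far : T -> Prop).
Variables (U phi : T -> R) (rho A B L : R).
Hypotheses (rho_gt0 : 0 < rho) (A_ge0 : 0 <= A) (B_ge0 : 0 <= B) (L_ge0 : 0 <= L).
Hypothesis d_ge0 : forall x y, 0 <= d x y.
Hypothesis phi01 : forall x, 0 <= phi x <= 1.
Hypothesis U_bounded : forall x, far x -> `|U x| <= A.
Hypothesis U_lipschitz : forall x y, far y -> d x y <= rho -> `|U x - U y| <= B * d x y.
Hypothesis phi_lipschitz :
  forall x y, far y -> d x y <= rho -> `|phi x - phi y| <= L * d x y.

Lemma mul_cutoff_lipschitz x y : far y -> d x y <= rho ->
  `|U x * phi x - U y * phi y| <= (B + A * L) * d x y.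
Proof.
move=> fy dxy; have /andP[px0 px1] := phi01 x.
rewrite (_ : _ - _ = (U x - U y) * phi x + U y * (phi x - phi y)); last by ring.
apply: le_trans (ler_normD _ _) _; rewrite !normrM mulrDl -mulrA (ger0_norm px0).
apply: lerD; last by apply: ler_pM; rewrite ?U_bounded ?phi_lipschitz.
by rewrite -[leRHS]mulr1; apply: ler_pM; rewrite ?U_lipschitz.
Qed.

Lemma mul_cutoff_le_min x y : far x -> far y ->
  `|U x * phi x - U y * phi y|
    <= (B + A * L + 2 * A / Num.min rho 1) * Num.min 1 (d x y).
Proof.
move=> fx fy; set rb := Num.min rho 1.
have rb_gt0 : 0 < rb by rewrite lt_min rho_gt0 ltr01.
have dxy0 := d_ge0 x y; have AL_ge0 : 0 <= A * L := mulr_ge0 A_ge0 L_ge0.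
have Arb_ge0 : 0 <= 2 * A / rb by rewrite divr_ge0 ?mulr_ge0 // ltW.
have [near|far_xy] := leP (d x y) rb.
  have [near_rho near1] : d x y <= rho /\ d x y <= 1 by apply/andP; rewrite -le_min.
  rewrite (min_idPr near1); apply: le_trans (mul_cutoff_lipschitz fy near_rho) _.
  by rewrite ler_wpM2r // lerDl.
have Uphi_le (z : T) : far z -> `|U z * phi z| <= A.
  move=> fz; have /andP[pz0 pz1] := phi01 z.
  by rewrite normrM (ger0_norm pz0) -[leRHS]mulr1 ler_pM // U_bounded.
apply: le_trans (ler_normB _ _) _; apply: le_trans (lerD (Uphi_le x fx) (Uphi_le y fy)) _.
have rb_min : rb <= Num.min 1 (d x y) by rewrite le_min ge_min lexx orbT ltW.
apply: le_trans (_ : 2 * A / rb * rb <= _).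
  by rewrite divfK ?gt_eqF //; lra.
by apply: ler_pM => //; [exact: ltW | rewrite lerDr addr_ge0].
Qed.

End CutoffProduct.

Section HeisenbergGeometry.
Context {R : realType} {N : nat}.
Local Notation H := (Heis R N).
Implicit Types (p xi eta : H) (u v : 'I_N -> R) (b e nu r : R).

Lemma hx_hmk (x y : 'I_N -> R) t : hx (hmk x y t) = x.
Proof. by apply: funext => i; rewrite /hx /hmk mxE (unsplitK (inl _)) (unsplitK (inl _)). Qed.

Lemma hy_hmk (x y : 'I_N -> R) t : hy (hmk x y t) = y.
Proof. by apply: funext => i; rewrite /hy /hmk mxE (unsplitK (inl _)) (unsplitK (inr _)). Qed.

Lemma ht_hmk (x y : 'I_N -> R) t : ht (hmk x y t) = t.
Proof. by rewrite /ht /hmk mxE (unsplitK (inr _)). Qed.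

Lemma sqN_ge0 u : 0 <= sqN u.
Proof. by apply: sumr_ge0 => i _; exact: sqr_ge0. Qed.

Lemma sqNZ c u : sqN (fun i => c * u i) = c ^+ 2 * sqN u.
Proof. by rewrite /sqN /dotN mulr_sumr; apply: eq_bigr => i _; ring. Qed.

Lemma sqNN u : sqN (fun i => - u i) = sqN u.
Proof. by apply: eq_bigr => i _; rewrite mulrNN. Qed.

Lemma sqr_le_sqN u i : u i ^+ 2 <= sqN u.
Proof. by rewrite /sqN /dotN (bigD1 i) //= lerDl sumr_ge0 // => j _; exact: sqr_ge0. Qed.

Lemma dotN2_le (a b c d : 'I_N -> R) (e h : R) : 0 <= e -> 0 <= h ->
  sqN a + sqN c <= e ^+ 2 -> sqN b + sqN d <= h ^+ 2 ->
  `|dotN a b + dotN c d| <= e * h.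
Proof.
move=> e0 h0 ac bd; apply: normr_le_sqr; first exact: mulr_ge0.
pose glue (u v : 'I_N -> R) (k : 'I_N + 'I_N) := match k with inl i => u i | inr i => v i end.
have := sum_CauchySchwarz (glue a c) (glue b d); rewrite !big_sumType /=.
move/le_trans; apply; rewrite exprMn.
by apply: ler_pM; rewrite ?addr_ge0 ?sqN_ge0.
Qed.

Definition hz2 p : R := sqN (hx p) + sqN (hy p).

Definition hdist xi eta : R := hnorm (hmul (hinv eta) xi).

Definition hgauge nu p : R := ht p ^+ 2 + (nu + hz2 p) ^+ 2.

Lemma hz2_ge0 p : 0 <= hz2 p.
Proof. by rewrite addr_ge0 ?sqN_ge0. Qed.

Lemma hgauge_ge0 nu p : 0 <= hgauge nu p.
Proof. by rewrite addr_ge0 ?sqr_ge0. Qed.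

Lemma hdist_ge0 xi eta : 0 <= hdist xi eta.
Proof. exact: sqrtr_ge0. Qed.

Lemma hnorm4 p : hnorm p ^+ 4 = hgauge 0 p.
Proof. by rewrite sqrt_sqrt_expr4 ?addr_ge0 ?sqr_ge0 // /hgauge add0r addrC. Qed.

Lemma hnorm4_le_hgauge nu p : 0 <= nu -> hnorm p ^+ 4 <= hgauge nu p.
Proof. by move=> nu0; rewrite hnorm4 lerD2l ler_sqr ?nnegrE ?addr_ge0 ?sqN_ge0 // lerD2r. Qed.

Lemma hz2_le_hnorm p : hz2 p <= hnorm p ^+ 2.
Proof.
rewrite -ler_sqr ?nnegrE ?hz2_ge0 ?sqr_ge0 // -exprM hnorm4.
by rewrite /hgauge add0r lerDr sqr_ge0.
Qed.

Lemma ht_le_hnorm p : `|ht p| <= hnorm p ^+ 2.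
Proof.
by apply: normr_le_sqr; rewrite ?sqr_ge0 // -exprM hnorm4 /hgauge lerDl sqr_ge0.
Qed.

Lemma hx_le_hnorm p i : `|hx p i| <= hnorm p.
Proof.
apply: normr_le_sqr; first exact: sqrtr_ge0.
by rewrite (le_trans (sqr_le_sqN _ i)) // (le_trans _ (hz2_le_hnorm p)) // lerDl sqN_ge0.
Qed.

Lemma hy_le_hnorm p i : `|hy p i| <= hnorm p.
Proof.
apply: normr_le_sqr; first exact: sqrtr_ge0.
by rewrite (le_trans (sqr_le_sqN _ i)) // (le_trans _ (hz2_le_hnorm p)) // lerDr sqN_ge0.
Qed.

Lemma hx_hmul_hinv xi eta : hx (hmul (hinv eta) xi) = (fun i => hx xi i - hx eta i).
Proof. by rewrite /hmul /hinv !hx_hmk; apply: funext => i; rewrite addrC. Qed.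

Lemma hy_hmul_hinv xi eta : hy (hmul (hinv eta) xi) = (fun i => hy xi i - hy eta i).
Proof. by rewrite /hmul /hinv !hy_hmk; apply: funext => i; rewrite addrC. Qed.

Lemma ht_hmul_hinv xi eta : ht (hmul (hinv eta) xi) =
  ht xi - ht eta - 2 * (dotN (hx xi) (hy eta) - dotN (hy xi) (hx eta)).
Proof.
rewrite /hmul /hinv !ht_hmk !hx_hmk !hy_hmk /dotN.
rewrite (_ : \sum_i hx xi i * - hy eta i = - \sum_i hx xi i * hy eta i); last first.
  by rewrite -sumrN; apply: eq_bigr => i _; rewrite mulrN.
rewrite (_ : \sum_i hy xi i * - hx eta i = - \sum_i hy xi i * hx eta i); last first.
  by rewrite -sumrN; apply: eq_bigr => i _; rewrite mulrN.
ring.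
Qed.

Lemma sqN_sub u v : sqN u - sqN v = 2 * dotN v (fun i => u i - v i) + sqN (fun i => u i - v i).
Proof. by rewrite /sqN /dotN mulr_sumr -sumrB -big_split /=; apply: eq_bigr => i _; ring. Qed.

Lemma hz2_sub xi eta : hz2 xi - hz2 eta =
  2 * (dotN (hx eta) (hx (hmul (hinv eta) xi)) + dotN (hy eta) (hy (hmul (hinv eta) xi)))
  + hz2 (hmul (hinv eta) xi).
Proof.
rewrite /hz2 hx_hmul_hinv hy_hmul_hinv.
rewrite (_ : _ - _ = (sqN (hx xi) - sqN (hx eta)) + (sqN (hy xi) - sqN (hy eta))); last by ring.
by rewrite !sqN_sub; ring.
Qed.

Lemma dotN_cross_sub (x1 y1 x2 y2 : 'I_N -> R) : dotN x1 y2 - dotN y1 x2 =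
  dotN (fun i => x1 i - x2 i) y2 + dotN (fun i => y1 i - y2 i) (fun i => - x2 i).
Proof. by rewrite /dotN -sumrB -big_split /=; apply: eq_bigr => i _; ring. Qed.

Lemma ht_sub xi eta : ht xi - ht eta = ht (hmul (hinv eta) xi) +
  2 * (dotN (hx (hmul (hinv eta) xi)) (hy eta)
       + dotN (hy (hmul (hinv eta) xi)) (fun i => - hx eta i)).
Proof. by rewrite ht_hmul_hinv hx_hmul_hinv hy_hmul_hinv -dotN_cross_sub; ring. Qed.

Lemma hz2_sub_le xi eta e : 0 <= e -> hz2 eta <= e ^+ 2 ->
  `|hz2 xi - hz2 eta| <= 2 * e * hdist xi eta + hdist xi eta ^+ 2.
Proof.
move=> e0 eta_e.
rewrite hz2_sub; apply: le_trans (ler_normD _ _) _.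
rewrite normrM normr_nat (ger0_norm (hz2_ge0 _)) -mulrA.
apply: lerD; last exact: hz2_le_hnorm.
by rewrite ler_wpM2l // dotN2_le ?hdist_ge0 ?hz2_le_hnorm.
Qed.

Lemma ht_sub_le xi eta e : 0 <= e -> hz2 eta <= e ^+ 2 ->
  `|ht xi - ht eta| <= 2 * e * hdist xi eta + hdist xi eta ^+ 2.
Proof.
move=> e0 eta_e.
rewrite ht_sub addrC; apply: le_trans (ler_normD _ _) _.
rewrite normrM normr_nat -mulrA.
apply: lerD; last exact: ht_le_hnorm.
rewrite ler_wpM2l // mulrC dotN2_le ?hdist_ge0 ?hz2_le_hnorm //.
by rewrite sqNN addrC.
Qed.

Lemma hgauge_sub_le nu e xi eta : 0 <= nu -> 0 <= e -> hgauge nu eta = e ^+ 4 ->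
  60 * hdist xi eta <= e ->
  `|hgauge nu xi - hgauge nu eta| <= 18 * hdist xi eta * e ^+ 3.
Proof.
move=> nu0 e0 eta_e near; have h0 := hdist_ge0 xi eta; set h := hdist xi eta in near h0 *.
have hz2_eta : hz2 eta <= e ^+ 2.
  suff : nu + hz2 eta <= e ^+ 2 by lra.
  rewrite -ler_sqr ?nnegrE ?addr_ge0 ?sqN_ge0 ?sqr_ge0 // -exprM -eta_e.
  by rewrite /hgauge lerDr sqr_ge0.
have small : 2 * e * h + h ^+ 2 <= 3 * e * h by nra.
have dt := le_trans (ht_sub_le xi e0 hz2_eta) small.
have dz : `|(nu + hz2 xi) - (nu + hz2 eta)| <= 3 * e * h.
  by rewrite (_ : _ - _ = hz2 xi - hz2 eta) ?(le_trans (hz2_sub_le xi e0 hz2_eta)) //; ring.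
rewrite (_ : 18 * h * e ^+ 3 = 6 * (3 * e * h) * e ^+ 2); last by ring.
by apply: sqr_add_sqr_perturb dt dz => //; nra.
Qed.

Lemma hgauge_ge_half nu e xi eta : 0 <= nu -> 0 <= e -> hgauge nu eta = e ^+ 4 ->
  60 * hdist xi eta <= e -> e ^+ 4 / 2 <= hgauge nu xi.
Proof.
move=> nu0 e0 eta_e near; have := hgauge_sub_le nu0 e0 eta_e near.
rewrite eta_e ler_norml => /andP[lo _].
have : 60 * hdist xi eta * e ^+ 3 <= e * e ^+ 3 by rewrite ler_wpM2r ?exprn_ge0.
have := hdist_ge0 xi eta; have := exprn_ge0 3 e0; rewrite -exprS; nra.
Qed.

Lemma hnorm4_half_le xi eta : 60 * hdist xi eta <= hnorm eta ->
  hnorm eta ^+ 4 / 2 <= hnorm xi ^+ 4.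
Proof.
move=> near; rewrite [hnorm xi ^+ 4]hnorm4.
exact: hgauge_ge_half (lexx 0) (sqrtr_ge0 _) (esym (hnorm4 eta)) near.
Qed.

Lemma hgauge_powRN_le nu b r p : 0 <= nu -> 0 <= b -> 0 < r -> r <= hnorm p ->
  hgauge nu p `^ (- b) <= (r ^+ 4) `^ (- b).
Proof.
move=> nu0 b0 r0 rp; apply: le_powRN => //; first exact: exprn_gt0.
apply: le_trans (hnorm4_le_hgauge p nu0).
by rewrite ler_pXn2r // nnegrE ?sqrtr_ge0 ?(ltW r0).
Qed.

Lemma hgauge_powRN_lipschitz nu b r xi eta : 0 <= nu -> 0 <= b -> 0 < r ->
  r <= hnorm eta -> 60 * hdist xi eta <= r ->
  `|hgauge nu xi `^ (- b) - hgauge nu eta `^ (- b)|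
    <= 36 * b * (r ^+ 4 / 2) `^ (- b) / r * hdist xi eta.
Proof.
move=> nu0 b0 r0 r_eta near; have h0 := hdist_ge0 xi eta.
set h := hdist xi eta in near h0 *.
set e : R := Num.sqrt (Num.sqrt (hgauge nu eta)).
have e4 : hgauge nu eta = e ^+ 4 by rewrite sqrt_sqrt_expr4 ?hgauge_ge0.
have e0 : 0 <= e := sqrtr_ge0 _.
have r_e : r <= e.
  apply: le_of_expr4_le; rewrite ?(ltW r0) // -e4.
  apply: le_trans (hnorm4_le_hgauge eta nu0).
  by rewrite ler_pXn2r // nnegrE ?sqrtr_ge0 ?(ltW r0).
have e_gt0 : 0 < e := lt_le_trans r0 r_e.
set m := e ^+ 4 / 2.
have m_gt0 : 0 < m by rewrite divr_gt0 // exprn_gt0.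
have m_xi : m <= hgauge nu xi := hgauge_ge_half nu0 e0 e4 (le_trans near r_e).
have m_eta : m <= hgauge nu eta by rewrite e4 /m; have := exprn_ge0 4 e0; lra.
apply: le_trans (powRN_lipschitz m_gt0 m_xi m_eta b0) _.
apply: le_trans (ler_wpM2l _ (hgauge_sub_le nu0 e0 e4 (le_trans near r_e))) _.
  by rewrite mulr_ge0 ?powR_ge0.
have -> : b * m `^ (- b - 1) * (18 * h * e ^+ 3) = 36 * b * m `^ (- b) / e * h.
  rewrite powRD ?(gt_eqF m_gt0) ?implybT // powR_inv1 ?(ltW m_gt0) // /m.
  by field; rewrite gt_eqF.
rewrite ler_wpM2r //; apply: ler_pM.
- by rewrite !mulr_ge0 ?powR_ge0.
- by rewrite invr_ge0.
- rewrite ler_wpM2l ?mulr_ge0 // le_powRN ?divr_gt0 ?exprn_gt0 //.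
  by rewrite ler_pM2r // ler_pXn2r // nnegrE ltW.
- by rewrite lef_pV2.
Qed.

Lemma hcoord_le p k : `|p ord0 k| <= hnorm p + hnorm p ^+ 2.
Proof.
case: (split_ordP k) => [k' ->|k' ->]; last first.
  by rewrite (ord1 k'); apply: le_trans (ht_le_hnorm p) _; rewrite lerDr sqrtr_ge0.
case: (split_ordP k') => [i ->|i ->].
  by apply: le_trans (hx_le_hnorm p i) _; rewrite lerDl sqr_ge0.
by apply: le_trans (hy_le_hnorm p i) _; rewrite lerDl sqr_ge0.
Qed.

Lemma hcoord_dist_le xi eta e : hnorm eta <= e -> hdist xi eta <= e ->
  \sum_k `|xi ord0 k - eta ord0 k| <= (2 * N%:R + 3 * e) * hdist xi eta.
Proof.
move=> eta_e h_e; have h0 := hdist_ge0 xi eta; set h := hdist xi eta in h_e h0 *.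
have e0 : 0 <= e := le_trans (sqrtr_ge0 _) eta_e.
have dx i : `|hx xi i - hx eta i| <= h.
  by have := hx_le_hnorm (hmul (hinv eta) xi) i; rewrite hx_hmul_hinv.
have dy i : `|hy xi i - hy eta i| <= h.
  by have := hy_le_hnorm (hmul (hinv eta) xi) i; rewrite hy_hmul_hinv.
have hz2_eta : hz2 eta <= e ^+ 2.
  by rewrite (le_trans (hz2_le_hnorm eta)) // ler_pXn2r // nnegrE sqrtr_ge0.
have dt : `|ht xi - ht eta| <= 3 * e * h.
  by apply: le_trans (ht_sub_le xi e0 hz2_eta) _; rewrite -/h; nra.
rewrite big_split_ord big_split_ord big_ord1 /=.
have sum_le (F : 'I_N -> R) : (forall i, F i <= h) -> \sum_i F i <= h *+ N.
  move=> Fh; apply: le_trans (_ : \sum_(i < N) h <= _); first exact: ler_sum.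
  by rewrite sumr_const card_ord.
rewrite (_ : (2 * N%:R + 3 * e) * h = h *+ N + h *+ N + 3 * e * h); last first.
  by rewrite -mulr_natr; ring.
by apply: lerD => //; apply: lerD; exact: sum_le.
Qed.

Lemma near_in_box xi eta e : hnorm eta <= e -> hdist xi eta <= e ->
  box (e + e ^+ 2 + (2 * N%:R + 3 * e) * e) xi /\
  box (e + e ^+ 2 + (2 * N%:R + 3 * e) * e) eta.
Proof.
move=> eta_e h_e; have e0 : 0 <= e := le_trans (sqrtr_ge0 _) eta_e.
have slack : 0 <= (2 * N%:R + 3 * e) * e by rewrite mulr_ge0 // addr_ge0 // mulr_ge0.
have eta_k k : `|eta ord0 k| <= e + e ^+ 2.
  by apply: le_trans (hcoord_le eta k) (lerD eta_e _); rewrite ler_pXn2r // nnegrE sqrtr_ge0.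
split=> k; last by apply: le_trans (eta_k k) _; rewrite lerDl.
have := ler_normD (xi ord0 k - eta ord0 k) (eta ord0 k); rewrite subrK => /le_trans; apply.
rewrite addrC lerD // (le_trans _ (le_trans (hcoord_dist_le eta_e h_e) _)) //.
  by rewrite (bigD1 k) //= lerDl sumr_ge0.
by rewrite ler_wpM2l // addr_ge0 // mulr_ge0.
Qed.

Lemma hnorm_ge_of_near r xi eta : 0 < r -> 3 * r <= hnorm eta -> 60 * hdist xi eta <= r ->
  2 * r <= hnorm xi.
Proof.
move=> r0 far near; have near_eta : 60 * hdist xi eta <= hnorm eta by lra.
apply: le_of_expr4_le; rewrite ?sqrtr_ge0 ?mulr_ge0 ?(ltW r0) //.
apply: le_trans (hnorm4_half_le near_eta).
have : (3 * r) ^+ 4 <= hnorm eta ^+ 4 by rewrite ler_pXn2r // nnegrE ?sqrtr_ge0 // mulr_ge0 // ltW.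
by rewrite !exprMn; have := exprn_ge0 4 (ltW r0); lra.
Qed.

Lemma cutoff_lipschitz (phi : H -> R) r : 0 < r -> smooth phi ->
  (forall p, ~ hball (2 * r) p -> phi p = 0) ->
  exists2 L, 0 <= L & forall xi eta, r <= hnorm eta -> hdist xi eta <= r / 60 ->
    `|phi xi - phi eta| <= L * hdist xi eta.
Proof.
move=> r0 phi_smooth phi_out; have e0 : 0 <= 3 * r by rewrite mulr_ge0 // ltW.
have phi_diff x : differentiable phi x := phi_smooth [::] x.
have partial_cont k : continuous ('D_(delta_mx 0 k) phi).
  by move=> x; apply/differentiable_continuous/(phi_smooth [:: delta_mx 0 k] x).
have [L L0 phi_lip] := lipschitz_on_box phi_diff partial_cont
  (3 * r + (3 * r) ^+ 2 + (2 * N%:R + 3 * (3 * r)) * (3 * r)).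
exists (L * (2 * N%:R + 3 * (3 * r))); first by rewrite mulr_ge0 // addr_ge0 // mulr_ge0.
move=> xi eta r_eta; rewrite ler_pdivlMr // mulrC => near; have h0 := hdist_ge0 xi eta.
have [far|/ltW eta_e] := leP (3 * r) (hnorm eta).
  have phi0 p : 2 * r <= hnorm p -> phi p = 0.
    by move=> rp; apply: phi_out; apply/negP; rewrite -leNgt.
  rewrite (phi0 xi (hnorm_ge_of_near r0 far near)) (phi0 eta) ?subrr ?normr0; last by lra.
  by rewrite !mulr_ge0 // addr_ge0 // mulr_ge0.
have [|box_xi box_eta] := near_in_box eta_e (_ : hdist xi eta <= 3 * r); first by lra.
apply: le_trans (phi_lip _ _ box_xi box_eta) _.
by rewrite -mulrA ler_wpM2l // hcoord_dist_le //; lra.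
Qed.

End HeisenbergGeometry.

Section BubbleEstimates.
Context {R : realType} {N : nat}.
Variables (s C0 nrmU S : R).
Local Notation b := ((Qdim R N - 2 * s) / 4).
Local Notation a := ((Qdim R N - 2 * s) / 2).
Local Notation lambda := (powR S (- (1 / (2 * s)))).

Lemma hdilM (c1 c2 : R) (p : Heis R N) : hdil c1 (hdil c2 p) = hdil (c1 * c2) p.
Proof.
rewrite /hdil !hx_hmk !hy_hmk !ht_hmk.
by congr hmk; [apply: funext => i; ring | apply: funext => i; ring | rewrite exprMn; ring].
Qed.

Lemma Ubub_hdil (c : R) (p : Heis R N) : 0 < c ->
  Ubub s C0 (hdil c p) = C0 * (c ^+ 4) `^ (- b) * hgauge (c ^- 2) p `^ (- b).
Proof.
move=> c0; rewrite /Ubub /hdil ht_hmk hx_hmk hy_hmk !sqNZ -mulrA.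
rewrite -powRM ?hgauge_ge0 ?exprn_ge0 ?(ltW c0) //.
by congr (C0 * _ `^ _); rewrite /hgauge /hz2; field; rewrite gt_eqF.
Qed.

Lemma Ueps_hgauge (eps : R) : 0 < eps -> 0 < S -> exists2 nu, 0 <= nu & forall p : Heis R N,
  Ueps s C0 nrmU S eps p
    = C0 / nrmU * (lambda ^+ 4) `^ (- b) * eps `^ a * hgauge nu p `^ (- b).
Proof.
move=> eps0 S0; set c := lambda * (1 / eps).
have c0 : 0 < c by rewrite mulr_gt0 ?powR_gt0 ?divr_gt0.
exists (c ^- 2) => [|p]; first by rewrite invr_ge0 exprn_ge0 // ltW.
have scale : eps `^ (- a) * (c ^+ 4) `^ (- b) = (lambda ^+ 4) `^ (- b) * eps `^ a.
  have eps_inv : ((1 / eps) ^+ 4) `^ (- b) = eps `^ (4 * b).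
    rewrite -(@powR_mulrn _ (1 / eps) 4) ?divr_ge0 ?(ltW eps0) // -powRrM.
    by rewrite div1r -powR_inv1 ?(ltW eps0) // -powRrM; congr (_ `^ _); ring.
  rewrite exprMn powRM ?exprn_ge0 ?powR_ge0 ?divr_ge0 ?(ltW eps0) // eps_inv mulrCA.
  by rewrite -powRD ?(gt_eqF eps0) ?implybT //; congr (_ * _ `^ _); field.
rewrite /Ueps /ustar /ubar hdilM -/c Ubub_hdil //.
transitivity (C0 / nrmU * (eps `^ (- a) * (c ^+ 4) `^ (- b)) * hgauge (c ^- 2) p `^ (- b)).
  by ring.
by rewrite scale; ring.
Qed.

Lemma bubble_exponent_ge0 : s <= 1 -> 0 <= b.
Proof.
move=> s1; have Q2 : 2 <= Qdim R N by rewrite /Qdim ler_nat leq_addl.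
by rewrite divr_ge0 //; lra.
Qed.

Lemma Ueps_bounded_off_ball (r : R) : s <= 1 -> 0 <= C0 -> 0 <= nrmU -> 0 < S -> 0 < r ->
  exists2 A, 0 <= A & forall eps, 0 < eps -> forall p : Heis R N, r <= hnorm p ->
    `|Ueps s C0 nrmU S eps p| <= A * eps `^ a.
Proof.
move=> s1 C0_ge0 nrmU_ge0 S0 r0; have b0 := bubble_exponent_ge0 s1.
set K := C0 / nrmU * (lambda ^+ 4) `^ (- b).
have K0 : 0 <= K by rewrite mulr_ge0 ?divr_ge0 ?powR_ge0.
exists (K * (r ^+ 4) `^ (- b)) => [|eps eps0 p rp]; first by rewrite mulr_ge0 ?powR_ge0.
have [nu nu0 ->] := Ueps_hgauge eps0 S0.
rewrite ger0_norm ?mulr_ge0 ?powR_ge0 ?invr_ge0 // [leRHS]mulrAC.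
by rewrite ler_wpM2l ?mulr_ge0 ?powR_ge0 ?invr_ge0 // hgauge_powRN_le.
Qed.

Lemma Ueps_lipschitz_off_ball (r : R) : s <= 1 -> 0 <= C0 -> 0 <= nrmU -> 0 < S -> 0 < r ->
  exists2 B, 0 <= B & forall eps, 0 < eps -> forall xi eta : Heis R N,
    r <= hnorm eta -> hdist xi eta <= r / 60 ->
    `|Ueps s C0 nrmU S eps xi - Ueps s C0 nrmU S eps eta| <= B * eps `^ a * hdist xi eta.
Proof.
move=> s1 C0_ge0 nrmU_ge0 S0 r0; have b0 := bubble_exponent_ge0 s1.
set K := C0 / nrmU * (lambda ^+ 4) `^ (- b).
have K0 : 0 <= K by rewrite mulr_ge0 ?divr_ge0 ?powR_ge0.
set B := 36 * b * (r ^+ 4 / 2) `^ (- b) / r.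
have B0 : 0 <= B by rewrite divr_ge0 ?(ltW r0) // (mulr_ge0 (mulr_ge0 _ b0)) ?powR_ge0.
exists (K * B) => [|eps eps0 xi eta r_eta]; first exact: mulr_ge0.
rewrite ler_pdivlMr // mulrC => near.
have [nu nu0 U_eq] := Ueps_hgauge eps0 S0.
rewrite !U_eq -mulrBr normrM ger0_norm ?mulr_ge0 ?powR_ge0 ?invr_ge0 //.
rewrite (_ : K * B * _ * _ = K * eps `^ a * (B * hdist xi eta)); last by ring.
rewrite ler_wpM2l ?mulr_ge0 ?powR_ge0 ?invr_ge0 //; exact: hgauge_powRN_lipschitz.
Qed.

End BubbleEstimates.

Theorem lemma3p10 (R : realType) (N : nat) (s C0 S nrmU r : R)
  (Omega : set (Heis R N)) (phi : Heis R N -> R) :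
  (0 < N)%N -> 0 < s < 1 -> 0 < C0 -> 0 < S -> 0 < nrmU -> 0 < r ->
  open Omega -> bounded_set Omega -> hball (4 * r) `<=` Omega ->
  smooth phi -> (forall p, 0 <= phi p <= 1) ->
  (forall p, hball r p -> phi p = 1) ->
  (forall p, ~ hball (2 * r) p -> phi p = 0) ->
  exists rb C : R, 0 < rb /\ 0 < C /\
    forall eps : R, 0 < eps ->
      (forall xi eta : Heis R N, ~ hball r eta ->
         hnorm (hmul (hinv eta) xi) <= rb ->
         `|ueps s C0 nrmU S eps phi xi - ueps s C0 nrmU S eps phi eta|
           <= C * powR eps ((@Qdim R N - 2 * s) / 2) * hnorm (hmul (hinv eta) xi))
      /\
      (forall xi eta : Heis R N, ~ hball r xi -> ~ hball r eta ->
         `|ueps s C0 nrmU S eps phi xi - ueps s C0 nrmU S eps phi eta|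
           <= C * powR eps ((@Qdim R N - 2 * s) / 2)
                * Num.min 1 (hnorm (hmul (hinv eta) xi))).
Proof.
move=> _ /andP[_ /ltW s_le1] /ltW C0_ge0 S_gt0 /ltW nrmU_ge0 r_gt0 _ _ _.
move=> phi_smooth phi01 _ phi_out.
have [A A_ge0 U_bounded] := Ueps_bounded_off_ball (N := N) s_le1 C0_ge0 nrmU_ge0 S_gt0 r_gt0.
have [B B_ge0 U_lipschitz] := Ueps_lipschitz_off_ball (N := N) s_le1 C0_ge0 nrmU_ge0 S_gt0 r_gt0.
have [L L_ge0 phi_lipschitz] := cutoff_lipschitz r_gt0 phi_smooth phi_out.
have rho_gt0 : 0 < r / 60 by rewrite divr_gt0.
pose rb := Num.min (r / 60) 1; pose C := B + A * L + 2 * A / rb.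
have rb_gt0 : 0 < rb by rewrite /rb lt_min ltr01 rho_gt0.
have C_ge0 : 0 <= C by rewrite /C !addr_ge0 ?mulr_ge0 ?invr_ge0 ?(ltW rb_gt0).
exists rb, (C + 1); split=> //; split=> [|eps eps_gt0]; first by lra.
set k := eps `^ _; have k_ge0 : 0 <= k := powR_ge0 _ _.
have Ck : B * k + A * k * L + 2 * (A * k) / rb <= (C + 1) * k.
  by rewrite (_ : _ + _ = C * k) ?ler_wpM2r ?lerDl // /C; ring.
have outside p : ~ hball r p -> r <= hnorm p by move/negP; rewrite -leNgt.
split=> [xi eta /outside eta_far h_rb | xi eta /outside xi_far /outside eta_far].
  have h_rho : hdist xi eta <= r / 60 by apply: le_trans h_rb _; rewrite ge_min lexx.
  apply: le_trans (mul_cutoff_lipschitz phi01 (U_bounded _ eps_gt0) (U_lipschitz _ eps_gt0)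
    phi_lipschitz eta_far h_rho) _.
  by rewrite ler_wpM2r ?hdist_ge0 // (le_trans _ Ck) // lerDl divr_ge0 ?mulr_ge0 // ltW.
apply: le_trans (mul_cutoff_le_min rho_gt0 (mulr_ge0 A_ge0 k_ge0) (mulr_ge0 B_ge0 k_ge0) L_ge0
  hdist_ge0 phi01 (U_bounded _ eps_gt0) (U_lipschitz _ eps_gt0) phi_lipschitz xi_far eta_far) _.
by rewrite ler_wpM2r // le_min ler01 hdist_ge0.
Qed.
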